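(* Let $A$ be a semiprime algebra whose commutator is commutative and distributive w.r.t. arbitrary joins. Then for every $\theta\in\mathrm{Con}(A)$, $\theta^\perp=\bigcap\big(V_A(\theta^\perp)\cap\mathrm{Min}(A)\big)$ (with the intersection of the empty family being $\nabla_A$).
   Context: Let $A$ be an algebra of a fixed signature. $\mathrm{Con}(A)$ is the complete lattice of congruences of $A$, with bottom $\Delta_A=\{(a,a):a\in A\}$ and top $\nabla_A=A^2$. For $\alpha,\beta,\mu\in\mathrm{Con}(A)$, write $C(\alpha,\beta;\mu)$ if for all $n,k\in\mathbb N$, every term $t$ of arity $n+k$, all $(a_i,b_i)\in\alpha$ ($1\le i\le n$) and all $(c_j,d_j)\in\beta$ ($1\le j\le k$): $(t^A(a_1,\dots,a_n,c_1,\dots,c_k),t^A(a_1,\dots,a_n,d_1,\dots,d_k))\in\mu$ iff $(t^A(b_1,\dots,b_n,c_1,\dots,c_k),t^A(b_1,\dots,b_n,d_1,\dots,d_k))\in\mu$. The (term condition) commutator is $[\alpha,\beta]_A=\bigcap\{\mu\in\mathrm{Con}(A): C(\alpha,\beta;\mu)\}$; it satisfies $[\alpha,\beta]_A\subseteq\alpha\cap\beta$ and is monotone in each argument. ''The commutator of $A$ is commutative and distributive w.r.t. arbitrary joins'' means $[\alpha,\beta]_A=[\beta,\alpha]_A$ and $[\bigvee_{i\in I}\alpha_i,\beta]_A=\bigvee_{i\in I}[\alpha_i,\beta]_A$ for all $\alpha,\beta$ and all families $(\alpha_i)_{i\in I}$ in $\mathrm{Con}(A)$. A congruence $\phi\neq\nabla_A$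 is prime if for all $\alpha,\beta\in\mathrm{Con}(A)$, $[\alpha,\beta]_A\subseteq\phi$ implies $\alpha\subseteq\phi$ or $\beta\subseteq\phi$; $\mathrm{Spec}(A)$ is the set of prime congruences and $\mathrm{Min}(A)$ the set of minimal elements of $(\mathrm{Spec}(A),\subseteq)$. For $\theta\in\mathrm{Con}(A)$: $V_A(\theta)=\{\phi\in\mathrm{Spec}(A):\theta\subseteq\phi\}$ and $\rho_A(\theta)=\bigcap V_A(\theta)$ (the intersection of the empty family being $\nabla_A$). $A$ is semiprime if $\rho_A(\Delta_A)=\Delta_A$. For $\beta,\gamma\in\mathrm{Con}(A)$: $\beta\to\gamma=\bigvee\{\alpha\in\mathrm{Con}(A):[\alpha,\beta]_A\subseteq\gamma\}$ and $\beta^\perp=\beta\to\Delta_A$. *)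

From mathcomp Require Import ssreflect ssrfun ssrbool eqtype ssrnat fintype.

Set Implicit Arguments.
Unset Strict Implicit.

(* An algebra is a carrier A together with an
   interpretation op f : (('I_(ar f)) -> A) -> A of every symbol. *)

Inductive term (F : Type) (ar : F -> nat) (X : Type) : Type :=
  | Var : X -> term ar X
  | App : forall f : F, ('I_(ar f) -> term ar X) -> term ar X.

Arguments Var {F ar X} _.
Arguments App {F ar X} f _.

(* Binary relations on A; congruences are represented as relations. *)
Definition rel_on (A : Type) := A -> A -> Prop.

Definition rsub (A : Type) (r s : rel_on A) : Prop := forall x y, r x y -> s x y.
Definition req (A : Type) (r s : rel_on A) : Prop := forall x y, r x y <-> s x y.

Section UA.
Variables (F : Type) (ar : F -> nat) (A : Type)
          (op : forall f : F, ('I_(ar f) -> A) -> A).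

Fixpoint teval (X : Type) (v : X -> A) (t : term ar X) : A :=
  match t with
  | Var x => v x
  | App f ts => op (fun i => teval v (ts i))
  end.

Definition is_cong (r : rel_on A) : Prop :=
  (forall x, r x x) /\ (forall x y, r x y -> r y x) /\
  (forall x y z, r x y -> r y z -> r x z) /\
  (forall (f : F) (u w : 'I_(ar f) -> A),
      (forall i, r (u i) (w i)) -> r (op u) (op w)).

Definition Delta : rel_on A := fun x y => x = y.
Definition Nabla : rel_on A := fun _ _ => True.

(* arbitrary intersection of the congruences satisfying P (Nabla if none) *)
Definition cmeet (P : rel_on A -> Prop) : rel_on A :=
  fun x y => forall mu, P mu -> mu x y.

Definition cjoin (I : Type) (al : I -> rel_on A) : rel_on A :=
  cmeet (fun mu => is_cong mu /\ forall i, rsub (al i) mu).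

(* term condition C(alpha, beta; mu); a term of arity n+k is a term over the
   variables 'I_n + 'I_k *)
Definition TC (alpha beta mu : rel_on A) : Prop :=
  forall (n k : nat) (t : term ar ('I_n + 'I_k)%type)
         (a b : 'I_n -> A) (c d : 'I_k -> A),
    (forall i, alpha (a i) (b i)) -> (forall j, beta (c j) (d j)) ->
    (mu (teval (fun z => match z with inl i => a i | inr j => c j end) t)
        (teval (fun z => match z with inl i => a i | inr j => d j end) t)
     <->
     mu (teval (fun z => match z with inl i => b i | inr j => c j end) t)
        (teval (fun z => match z with inl i => b i | inr j => d j end) t)).

Definition comm (alpha beta : rel_on A) : rel_on A :=
  cmeet (fun mu => is_cong mu /\ TC alpha beta mu).

Definition comm_commutative : Prop :=
  forall alpha beta, is_cong alpha -> is_cong beta ->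
    req (comm alpha beta) (comm beta alpha).

Definition comm_join_distributive : Prop :=
  forall (I : Type) (al : I -> rel_on A) (beta : rel_on A),
    (forall i, is_cong (al i)) -> is_cong beta ->
    req (comm (cjoin al) beta) (cjoin (fun i => comm (al i) beta)).

Definition is_prime (phi : rel_on A) : Prop :=
  is_cong phi /\ ~ req phi Nabla /\
  forall alpha beta, is_cong alpha -> is_cong beta ->
    rsub (comm alpha beta) phi -> rsub alpha phi \/ rsub beta phi.

Definition is_min_prime (phi : rel_on A) : Prop :=
  is_prime phi /\ forall psi, is_prime psi -> rsub psi phi -> req psi phi.

Definition VA (theta phi : rel_on A) : Prop := is_prime phi /\ rsub theta phi.

Definition rhoA (theta : rel_on A) : rel_on A := cmeet (VA theta).

Definition semiprime : Prop := req (rhoA Delta) Delta.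

Definition carrow (beta gamma : rel_on A) : rel_on A :=
  cjoin (fun al : {alpha : rel_on A | is_cong alpha /\ rsub (comm alpha beta) gamma}
           => proj1_sig al).

Definition cperp (beta : rel_on A) : rel_on A := carrow beta Delta.

End UA.

From mathcomp Require Import ssreflect ssrfun ssrbool eqtype ssrnat fintype.
From mathcomp Require Import boolp classical_sets.
From Stdlib Require Import Classical.

Set Implicit Arguments.
Unset Strict Implicit.

(* Write P for the family of minimal prime congruences containing theta^perp
   and alpha for its intersection.  Clearly theta^perp <= alpha; for the
   converse it suffices, by the definition of theta^perp as a join, to show
   [alpha, theta] = Delta, and by semiprimeness that [alpha, theta] lies below
   every prime phi.  If theta <= phi this is because [alpha, theta] <= theta.
   Otherwise choose (Zorn) a minimal prime psi <= phi; then theta is not below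
   psi, and since [theta^perp, theta] = Delta (join-distributivity) and psi is
   prime, theta^perp <= psi.  So psi is in P, whence [alpha, theta] <= alpha
   <= psi <= phi. *)

Section Annihilators.
Variables (F : Type) (ar : F -> nat) (A : Type)
          (op : forall f : F, ('I_(ar f) -> A) -> A).

Lemma teval_cong (r : rel_on A) (X : Type) (v w : X -> A) (t : term ar X) :
  is_cong op r -> (forall z, r (v z) (w z)) -> r (teval op v t) (teval op w t).
Proof.
move=> [_ [_ [_ r_op]]] r_vw; elim: t => [x|f ts IH] /=; first exact: r_vw.
by apply: r_op => i; apply: IH.
Qed.

Lemma cmeet_cong (P : rel_on A -> Prop) :
  (forall mu, P mu -> is_cong op mu) -> is_cong op (cmeet P).
Proof.
move=> P_cong; split; [|split; [|split]].
- by move=> x mu /P_cong [].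
- move=> x y xy mu /[dup] /P_cong [_ [mu_sym _]] Pmu.
  by apply: mu_sym; apply: xy.
- move=> x y z xy yz mu /[dup] /P_cong [_ [_ [mu_trans _]]] Pmu.
  exact: mu_trans (xy _ Pmu) (yz _ Pmu).
- move=> f u w uw mu /[dup] /P_cong [_ [_ [_ mu_op]]] Pmu.
  by apply: mu_op => i; apply: uw.
Qed.

Lemma Delta_cong : is_cong op (@Delta A).
Proof.
split; [by []|split; [by move=> x y ->|split; [by move=> x y z -> ->|]]].
by move=> f u w uw; rewrite /Delta (funext uw).
Qed.

Lemma cperp_cong (theta : rel_on A) : is_cong op (cperp op theta).
Proof. by apply: cmeet_cong => mu []. Qed.

(* [alpha, beta] <= alpha: alpha itself satisfies C(alpha, beta; alpha). *)
Lemma comm_sub_l (alpha beta : rel_on A) :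
  is_cong op alpha -> rsub (comm op alpha beta) alpha.
Proof.
move=> /[dup] alpha_cong [al_refl [al_sym [al_trans _]]] x y xy.
apply: xy; split=> // n k t a b c d ab _.
have swap_a_b e : alpha
    (teval op (fun z => match z with inl i => a i | inr j => e j end) t)
    (teval op (fun z => match z with inl i => b i | inr j => e j end) t).
  by apply: teval_cong => // -[i|j]; [apply: ab|apply: al_refl].
split=> H.
- exact: al_trans (al_sym _ _ (swap_a_b c)) (al_trans _ _ _ H (swap_a_b d)).
- exact: al_trans (swap_a_b c) (al_trans _ _ _ H (al_sym _ _ (swap_a_b d))).
Qed.

(* [alpha, beta] <= beta: both sides of C(alpha, beta; beta) always hold. *)
Lemma comm_sub_r (alpha beta : rel_on A) :
  is_cong op beta -> rsub (comm op alpha beta) beta.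
Proof.
move=> /[dup] beta_cong [be_refl _] x y xy.
apply: xy; split=> // n k t a b c d _ cd.
have swap_c_d e : beta
    (teval op (fun z => match z with inl i => e i | inr j => c j end) t)
    (teval op (fun z => match z with inl i => e i | inr j => d j end) t).
  by apply: teval_cong => // -[i|j]; [apply: be_refl|apply: cd].
by split=> _; apply: swap_c_d.
Qed.

Lemma cperp_greatest (alpha theta : rel_on A) :
  is_cong op alpha -> rsub (comm op alpha theta) (@Delta A) ->
  rsub alpha (cperp op theta).
Proof.
move=> alpha_cong ann x y xy mu [_ mu_ub].
exact: (mu_ub (exist _ alpha (conj alpha_cong ann))).
Qed.

Hypothesis comm_distr : comm_join_distributive op.

(* theta^perp itself annihilates theta, as the commutator preserves joins. *)
Lemma comm_cperp (theta : rel_on A) :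
  is_cong op theta -> rsub (comm op (cperp op theta) theta) (@Delta A).
Proof.
move=> theta_cong x y.
move=> /(proj1 (comm_distr (fun i => proj1 (proj2_sig i)) theta_cong x y)).
apply; split; first exact: Delta_cong.
by move=> i; apply: (proj2 (proj2_sig i)).
Qed.

Lemma cperp_sub_prime (theta psi : rel_on A) :
  is_cong op theta -> is_prime op psi -> ~ rsub theta psi ->
  rsub (cperp op theta) psi.
Proof.
move=> theta_cong [[psi_refl _] [_ psi_prime]] theta_psi.
have comm_psi : rsub (comm op (cperp op theta) theta) psi.
  by move=> x y /(comm_cperp theta_cong) ->; apply: psi_refl.
by case: (psi_prime _ _ (cperp_cong theta) theta_cong comm_psi).
Qed.

Lemma chain_prime (Q : rel_on A -> Prop) (p0 : rel_on A) :
  Q p0 -> (forall p, Q p -> is_prime op p) ->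
  (forall p q, Q p -> Q q -> rsub p q \/ rsub q p) ->
  is_prime op (cmeet Q).
Proof.
move=> Qp0 Q_prime Q_chain; split; [|split].
- by apply: cmeet_cong => mu /Q_prime [].
- move=> QNabla; have [_ [p0_proper _]] := Q_prime _ Qp0.
  by apply: p0_proper => x y; split=> // _; apply: (proj2 (QNabla x y) I).
- move=> al be al_cong be_cong comm_sub.
  have not_below (r : rel_on A) : ~ rsub r (cmeet Q) -> exists p, Q p /\ ~ rsub r p.
    move=> r_Q; apply: NNPP => none; apply: r_Q => x y xy p Qp.
    by apply: NNPP => pxy; apply: none; exists p; split=> // /(_ x y xy).
  case: (classic (rsub al (cmeet Q))) => [|/not_below [p [Qp al_p]]]; first by left.
  case: (classic (rsub be (cmeet Q))) => [|/not_below [q [Qq be_q]]]; first by right.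
  exfalso; have [pq|qp] := Q_chain _ _ Qp Qq.
  + have [_ [_ p_prime]] := Q_prime _ Qp.
    have [//|be_p] := p_prime _ _ al_cong be_cong (fun x y xy => comm_sub x y xy p Qp).
    by apply: be_q => x y /be_p /pq.
  + have [_ [_ q_prime]] := Q_prime _ Qq.
    have [al_q|//] := q_prime _ _ al_cong be_cong (fun x y xy => comm_sub x y xy q Qq).
    by apply: al_p => x y /al_q /qp.
Qed.

(* Every prime contains a minimal prime (Zorn's lemma on the primes below it,
   ordered by reverse inclusion). *)
Lemma min_prime_below (phi : rel_on A) :
  is_prime op phi -> exists psi, is_min_prime op psi /\ rsub psi phi.
Proof.
move=> phi_prime.
pose T := {p : rel_on A | is_prime op p /\ rsub p phi}.
pose R (s t : T) := `[< rsub (proj1_sig t) (proj1_sig s) >].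
have R_refl s : R s s by apply/asboolP.
have R_trans r s t : R r s -> R s t -> R r t.
  by move=> /asboolP rs /asboolP st; apply/asboolP => x y /st /rs.
have R_anti s t : R s t -> R t s -> s = t.
  move: s t => [s Ps] [t Pt] /asboolP ts /asboolP st /=.
  have st_eq : s = t.
    by apply: funext => x; apply: funext => y; apply: propext; split; [apply: st|apply: ts].
  by subst t; congr exist; apply: Prop_irrelevance.
have R_chain (C : set T) : total_on C R -> exists t, forall s, C s -> R s t.
  move=> C_total.
  pose Q r := r = phi \/ exists s, C s /\ proj1_sig s = r.
  have Q_prime p : Q p -> is_prime op p.
    by case=> [->|[s [_ <-]]] //; case: (proj2_sig s).
  have Q_chain p q : Q p -> Q q -> rsub p q \/ rsub q p.
    case=> [->|[a [Ca <-]]]; case=> [->|[b [Cb <-]]].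
    + by left.
    + by right; apply: (proj2 (proj2_sig b)).
    + by left; apply: (proj2 (proj2_sig a)).
    + by case: (C_total _ _ Ca Cb) => /asboolP; [right|left].
  have inf_prime := chain_prime (or_introl erefl) Q_prime Q_chain.
  have inf_sub : rsub (cmeet Q) phi := fun x y xy => xy phi (or_introl erefl).
  exists (exist _ (cmeet Q) (conj inf_prime inf_sub)) => s Cs.
  by apply/asboolP => x y; apply; right; exists s.
have [[psi [psi_prime psi_phi]] psi_min] := Zorn R_refl R_trans R_anti R_chain.
exists psi; split=> //; split=> // psi' psi'_prime psi'_psi.
pose s' : T := exist _ psi' (conj psi'_prime (fun x y xy => psi_phi _ _ (psi'_psi _ _ xy))).
have [-> //] : s' = exist _ psi (conj psi_prime psi_phi).
by apply: psi_min; apply/asboolP.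
Qed.

Hypothesis semiprime_A : semiprime op.

Lemma min_primes_annihilate (theta : rel_on A) :
  is_cong op theta ->
  let alpha := cmeet (fun phi => VA op (cperp op theta) phi /\ is_min_prime op phi) in
  rsub (comm op alpha theta) (@Delta A).
Proof.
move=> theta_cong alpha.
have alpha_cong : is_cong op alpha by apply: cmeet_cong => mu [[[]]].
move=> x y xy; apply: (proj1 (semiprime_A x y)) => phi [phi_prime _].
case: (classic (rsub theta phi)) => [theta_phi|theta_phi].
  exact: theta_phi _ _ (comm_sub_r theta_cong xy).
have [psi [psi_min psi_phi]] := min_prime_below phi_prime.
have theta_psi : ~ rsub theta psi by move=> th_psi; apply: theta_phi => u v /th_psi /psi_phi.
have perp_psi := cperp_sub_prime theta_cong (proj1 psi_min) theta_psi.
have psi_P : VA op (cperp op theta) psi /\ is_min_prime op psi.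
  by split; [split; [case: psi_min|]|].
exact: psi_phi _ _ (comm_sub_l alpha_cong xy psi psi_P).
Qed.

End Annihilators.

Unset Implicit Arguments.

Theorem mainTheorem9 (F : Type) (ar : F -> nat) (A : Type)
    (op : forall f : F, ('I_(ar f) -> A) -> A) :
  semiprime op ->
  comm_commutative op ->
  comm_join_distributive op ->
  forall theta : rel_on A, is_cong op theta ->
    req (cperp op theta)
        (cmeet (fun phi => VA op (cperp op theta) phi /\ is_min_prime op phi)).
Proof.
move=> semiprime_A _ comm_distr theta theta_cong x y; split.
- by move=> xy phi [[_ perp_phi] _]; apply: perp_phi.
- apply: cperp_greatest; first by apply: cmeet_cong => mu [[[]]].
  exact: min_primes_annihilate.
Qed.
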